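(* In the setting of the symmetric stochastic game with program $\mathcal P_{SS}(\lambda;\Pi)$, let $\underline z<\bar z$ with $-k_{SS}(-1;\Pi)<\underline z<\bar z<k_{SS}(+1;\Pi)$ and $Z=[\underline z,\bar z]$. Let $\epsilon_0>0$ and, for each $\lambda\in\{-1,+1\}$, let $(v^\lambda,x^\lambda)$ (together with some $(\alpha^\lambda_s)_s$) be feasible in $\mathcal P_{SS}(\lambda;\Pi)$ with $v^{-1}+\epsilon_0<z<v^{+1}-\epsilon_0$ for all $z\in Z$. Let $\kappa_0=\max\{\max_{\lambda,s,t,y}|x^\lambda_s(t,y)|,\ \max_{\lambda,z\in Z}|z-v^\lambda|\}$, let $n\in\mathbb N$ satisfy $\epsilon_0\frac{n-1}{2}-2\kappa_0|S|>0$, and let $\bar\delta<1$ be such that for all $\delta\ge\bar\delta$: $(n/2)^2(1-\delta)\le|S|$ and $1-\delta^{n-1}\ge(n-1)(1-\delta)/2$. Then for every $\lambda\in\{-1,+1\}$, every $z\in Z$ and every $\delta\ge\bar\delta$ there exists $w:H^n\to\mathbb R$ such that (1) for every $s\in S$, $z$ is an SSE payoff of the game $\Gamma^n(s,w;\delta)$, and (2) $\lambda w(h)<\lambda z$ for every $h\in H^n$.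
   Context: Setting: finite set of players $I$, finite state set $S$, common finite action set $B$, finite public signal set $Y$; $p(t,y\mid s,a)$ is the probability of next state $t$ and public signal $y$ given state $s$ and action profile $a$; $u(\alpha,s)$ is each player's payoff when all play $\alpha\in\Delta(B)$ at $s$. The program $\mathcal P_{SS}(\lambda;\Pi)$, $\lambda\in\{-1,+1\}$: maximize $\lambda v$ over $v\in\mathbb R$, $(\alpha_s)_s\in\Delta(B)^{|S|}$, $x=(x_s(t,y))$ subject to (a) $v=u(\alpha_s,s)+\sum_{(t,y)}x_s(t,y)p(t,y\mid s,\alpha_s)$ for all $s$; (b) $v\ge u_i((b,\alpha_{s,-i}),s)+\sum_{(t,y)}x_s(t,y)p(t,y\mid s,(b,\alpha_{s,-i}))$ for all $s,i$ and $b\in B$; (c) $\lambda\sum_{s\in T}x_s(\xi(s),\psi(s))\le0$ for all $T\subseteq S$, permutations $\xi$ of $T$, and $\psi:T\to Y$; its value is $k_{SS}(\lambda;\Pi)$. $H^n$ is the set of public histories $h^n=(s^1,y^1,s^2,y^2,\dots,s^{n-1},y^{n-1},s^n)$ of length $n$. $\Gamma^n(s,w;\delta)$ is the $(n-1)$-stage game starting at state $s$ in which a player's payoff is $(1-\delta)\sum_{k=1}^{n-1}\delta^{k-1}u_i(a^k,s^k)+\delta^{n-1}w(h^n)$; an SSE of it is a strongly symmetric public-strategy equilibrium. *)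

From HB Require Import structures.
From mathcomp Require Import all_boot all_order all_algebra all_fingroup.
From mathcomp Require Import boolp classical_sets reals constructive_ereal ereal.
Set Implicit Arguments. Unset Strict Implicit. Unset Printing Implicit Defensive.
Import Order.TTheory GRing.Theory Num.Theory.
Local Open Scope ring_scope.

Section SymStochGame.
Variables (R : realType) (I S B Y : finType).
(* p s a t y = probability of next state t and public signal y given state s
   and pure action profile a *)
Variable p : S -> {ffun I -> B} -> S -> Y -> R.
Variable u : I -> {ffun I -> B} -> S -> R.

Definition transition_prob : Prop :=
  (forall s a t y, 0 <= p s a t y) /\
  (forall s a, \sum_(t : S) \sum_(y : Y) p s a t y = 1).

Definition symmetric_game : Prop :=
  forall (pi : {perm I}) (a : {ffun I -> B}) (s : S),
    (forall i, u i [ffun j => a (pi j)] s = u (pi i) a s) /\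
    (forall t y, p s [ffun j => a (pi j)] t y = p s a t y).

Definition is_mixed (al : {ffun B -> R}) : Prop :=
  (forall b, 0 <= al b) /\ \sum_(b : B) al b = 1.

Definition prof_prob (be : I -> {ffun B -> R}) (a : {ffun I -> B}) : R :=
  \prod_(i : I) be i (a i).
Definition exp_u (i : I) (be : I -> {ffun B -> R}) (s : S) : R :=
  \sum_(a : {ffun I -> B}) prof_prob be a * u i a s.
Definition exp_p (be : I -> {ffun B -> R}) (s t : S) (y : Y) : R :=
  \sum_(a : {ffun I -> B}) prof_prob be a * p s a t y.

Definition sym_prof (al : {ffun B -> R}) : I -> {ffun B -> R} := fun _ => al.
Definition pure (b : B) : {ffun B -> R} := [ffun b' => (b' == b)%:R].
Definition dev_prof (i : I) (b : B) (al : {ffun B -> R}) : I -> {ffun B -> R} :=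
  fun j => if j == i then pure b else al.

(* u(alpha, s): each player's payoff when all play alpha (well defined by
   symmetry; we read it off an arbitrary player) *)
Definition ucom (al : {ffun B -> R}) (s : S) : R :=
  if [pick i : I] is Some i then exp_u i (sym_prof al) s else 0.

Definition feasible (lam v : R) (al : S -> {ffun B -> R})
    (x : S -> S -> Y -> R) : Prop :=
  (forall s, is_mixed (al s)) /\
  (forall s, v = ucom (al s) s +
      \sum_(t : S) \sum_(y : Y) x s t y * exp_p (sym_prof (al s)) s t y) /\
  (forall s i b, v >= exp_u i (dev_prof i b (al s)) s +
      \sum_(t : S) \sum_(y : Y) x s t y * exp_p (dev_prof i b (al s)) s t y) /\
  (forall (T : {set S}) (xi : {perm S}) (psi : S -> Y), perm_on T xi ->
      lam * (\sum_(s in T) x s (xi s) (psi s)) <= 0).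

Definition kSS (lam : R) : \bar R :=
  ereal_sup [set (lam * v)%:E | v in
              [set v | exists al x, feasible lam v al x]].

(* public histories (s^1,y^1,...,s^{k-1},y^{k-1},s^k): the list of
   (state, signal) pairs together with the current state *)
Definition hist := (seq (S * Y) * S)%type.
Definition in_Hn (n : nat) (h : hist) : Prop := size h.1 = n.-1.

Definition pub_strat := hist -> {ffun B -> R}.
Definition valid_strat (sg : pub_strat) : Prop := forall h, is_mixed (sg h).

(* expected normalised payoff of player i from history h when m stages
   remain, under the profile be, with terminal payoff w and discount delta:
   (1-d) sum_k d^(k-1) u_i + d^m w *)
Fixpoint val (i : I) (be : I -> pub_strat) (w : hist -> R) (d : R)
    (m : nat) (h : hist) : R :=
  match m with
  | 0 => w h
  | m'.+1 =>
      (1 - d) * exp_u i (fun j => be j h) h.2 +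
      d * \sum_(t : S) \sum_(y : Y)
            exp_p (fun j => be j h) h.2 t y *
            val i be w d m' (rcons h.1 (h.2, y), t)
  end.

Definition dev_strat (i : I) (tau sg : pub_strat) : I -> pub_strat :=
  fun j => if j == i then tau else sg.

Definition payoffG (n : nat) (s : S) (w : hist -> R) (d : R)
    (i : I) (be : I -> pub_strat) : R :=
  val i be w d n.-1 ([::], s).

Definition is_SSE (n : nat) (s : S) (w : hist -> R) (d : R)
    (sg : pub_strat) : Prop :=
  valid_strat sg /\
  forall i (tau : pub_strat), valid_strat tau ->
    payoffG n s w d i (dev_strat i tau sg) <= payoffG n s w d i (fun _ => sg).

Definition SSE_payoff (n : nat) (s : S) (w : hist -> R) (d : R) (z : R) : Prop :=
  exists sg, is_SSE n s w d sg /\ forall i, payoffG n s w d i (fun _ => sg) = z.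

End SymStochGame.

Definition kappa0 {R : realType} {S Y : finType}
    (xm xp : S -> S -> Y -> R) (vm vp zl zh : R) : R :=
  Num.max
    (\big[Num.max/0]_(s : S) \big[Num.max/0]_(t : S) \big[Num.max/0]_(y : Y)
        Num.max `|xm s t y| `|xp s t y|)
    (Num.max (sup [set `|z - vm| | z in [set z | zl <= z <= zh]])
             (sup [set `|z - vp| | z in [set z | zl <= z <= zh]])).

From Pilot Require Import Defs.
From HB Require Import structures.
From mathcomp Require Import all_boot all_order all_algebra all_fingroup.
From mathcomp Require Import boolp classical_sets reals constructive_ereal ereal.
From mathcomp Require Import ring lra zify.
Set Implicit Arguments. Unset Strict Implicit. Unset Printing Implicit Defensive.
Import Order.TTheory GRing.Theory Num.Theory.
Local Open Scope ring_scope.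

(* All players follow the stationary profile alpha_s of the feasible program,
   and the terminal payoff credits the transition (s, t, y) realised at stage k
   with (1 - delta) delta^k (x_s(t,y) - v), everything rescaled by
   delta^-(n-1).  By (a) the continuation value after any history is z plus the
   credits collected so far, so z is an equilibrium payoff, and by (b) no
   one-shot deviation pays.  For lambda w < lambda z, cut the walk of visited
   states into simple cycles and at most |S| leftover transitions: by (c) each
   cycle contributes nonpositively, so by Abel summation lambda times the
   discounted transfers is at most kappa0 |S|, which is dominated by the drift
   (1 - delta^(n-1)) lambda (z - v) <= - eps0 (n - 1) (1 - delta) / 2. *)

(* For a history with past [l] and current state [e], [edges l e] lists its
   transitions (s_k, s_(k+1), y_k). *)
Fixpoint edges {S Y : Type} (l : seq (S * Y)) (e : S) : seq (S * S * Y) :=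
  if l is q :: l' then (q.1, head e (map fst l'), q.2) :: edges l' e else [::].

Section Edges.
Variables S Y : Type.

Lemma size_edges (l : seq (S * Y)) e : size (edges l e) = size l.
Proof. by elim: l => //= q l ->. Qed.

Lemma edges_cat (l1 l2 : seq (S * Y)) e :
  edges (l1 ++ l2) e = edges l1 (head e (map fst l2)) ++ edges l2 e.
Proof. by elim: l1 => //= q [|q' l1] ->. Qed.

Lemma edges_rcons (l : seq (S * Y)) s y t :
  edges (rcons l (s, y)) t = rcons (edges l s) (s, t, y).
Proof. by rewrite -cats1 edges_cat cats1. Qed.

Lemma take_edges (l : seq (S * Y)) e j :
  take j (edges l e) = edges (take j l) (head e (map fst (drop j l))).
Proof.
elim: l j => [|q l IH] [|j] //=; rewrite IH; congr (_ :: _).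
by case: l {IH} => [|q' l'] //; case: j.
Qed.

Lemma nth_edges (l : seq (S * Y)) e q0 q1 i : (i < size l)%N ->
  nth q0 (edges l e) i = ((nth q1 l i).1, nth e (map fst l) i.+1, (nth q1 l i).2).
Proof. by elim: l i => //= q l IH [|i] /=; [case: l {IH} | move/IH]. Qed.

End Edges.

Section ClosedWalks.
Variables (S : finType) (Y : Type).

Lemma nonuniq_split_cycle (l : seq (S * Y)) : ~~ uniq (map fst l) ->
  exists l1 s y c y' l2, l = l1 ++ ((s, y) :: c) ++ ((s, y') :: l2) /\
    uniq (s :: map fst c).
Proof.
elim: l => //= q l IH; rewrite negb_and negbK => /orP[q_in | /IH].
- case: (boolP (uniq (map fst l))) => [l_uniq | /IH]; last first.
    by move=> [l1 [s [y [c [y' [l2 [-> c_uniq]]]]]]]; exists (q :: l1), s, y, c, y', l2.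
  set i := index q.1 (map fst l).
  have i_lt : (i < size l)%N by rewrite -(size_map fst) index_mem.
  have nth_i : (nth q l i).1 = q.1 by rewrite -(nth_map q q.1 fst i_lt) nth_index.
  exists [::], q.1, q.2, (take i l), (nth q l i).2, (drop i.+1 l); split.
    have -> : (q.1, (nth q l i).2) = nth q l i by rewrite -nth_i -surjective_pairing.
    by rewrite /= -{1}(cat_take_drop i l) (drop_nth q i_lt) -surjective_pairing.
  by rewrite /= map_take take_uniq // andbT in_take // ltnn.
- by move=> [l1 [s [y [c [y' [l2 [-> c_uniq]]]]]]]; exists (q :: l1), s, y, c, y', l2.
Qed.

Variables (R : numDomainType) (a : S -> S -> Y -> R) (k : R).
Hypothesis a_cycle_le0 : forall (T : {set S}) (xi : {perm S}) (psi : S -> Y),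
  perm_on T xi -> \sum_(t in T) a t (xi t) (psi t) <= 0.

(* A simple closed walk is the cycle structure of the permutation [next] on
   its support, labelled by the signals it carries. *)
Lemma simple_cycle_edges_le0 s y (c : seq (S * Y)) : uniq (s :: map fst c) ->
  \sum_(q <- edges ((s, y) :: c) s) a q.1.1 q.1.2 q.2 <= 0.
Proof.
set w := (s, y) :: c => w_uniq.
pose xi := perm (can_inj (prev_next w_uniq)).
pose psi t := nth y (map snd w) (index t (map fst w)).
have xi_on : perm_on [set t in map fst w] xi.
  apply/fintype.subsetP => t; rewrite !inE permE; apply: contraNT => t_notin.
  by rewrite next_nth inE (negbTE t_notin) eqxx.
apply: le_trans (a_cycle_le0 psi xi_on); rewrite le_eqVlt; apply/orP; left.
rewrite (eq_bigl (mem (map fst w))) => [|t]; last by rewrite inE.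
rewrite -big_uniq // (big_nth (s, s, y)) (big_nth s) size_edges size_map.
apply/eqP/eq_big_nat => i /andP[_ i_lt].
have nth_fst : nth s (map fst w) i = (nth (s, y) w i).1 by rewrite (nth_map (s, y)).
rewrite (nth_edges _ _ (s, y) i_lt) /= -nth_fst permE /psi.
have nth_in : nth s (map fst w) i \in map fst w by rewrite mem_nth // size_map.
rewrite next_nth nth_in index_uniq //; last by rewrite /= size_map.
by rewrite (nth_map (s, y) y snd i_lt).
Qed.

Hypotheses (a_le : forall s t y, a s t y <= k) (k_ge0 : 0 <= k).

(* Cut out simple cycles until the walk visits each state at most once. *)
Lemma edges_sum_le (l : seq (S * Y)) e :
  \sum_(q <- edges l e) a q.1.1 q.1.2 q.2 <= k * #|S|%:R.
Proof.
elim: {l}_.+1 {-2}l e (ltnSn (size l)) => // N IH l e size_l.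
have [l_uniq | /nonuniq_split_cycle] := boolP (uniq (map fst l)).
  apply: (@le_trans _ _ (\sum_(q <- edges l e) k)); first exact: ler_sum.
  rewrite big_const_seq count_predT size_edges iter_addr addr0 -[k *+ _]mulr_natr.
  rewrite ler_wpM2l // ler_nat.
  by have := max_card (mem (map fst l)); rewrite (card_uniqP l_uniq) size_map.
move=> [l1 [s [y [c [y' [l2 [l_eq c_uniq]]]]]]].
have short : (size (l1 ++ (s, y') :: l2) < N)%N.
  by move: size_l; rewrite l_eq !size_cat /=; lia.
have := IH _ e short; rewrite l_eq !edges_cat !big_cat /=.
have := simple_cycle_edges_le0 y c_uniq; rewrite /= => cyc_le0 rest_le.
by rewrite addrCA ler_wnDl.
Qed.

End ClosedWalks.

Fixpoint disc_sum {R : pzRingType} (d : R) (l : seq R) : R :=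
  if l is a :: l' then a + d * disc_sum d l' else 0.

Lemma disc_sum_rcons (R : comPzRingType) (d : R) l a :
  disc_sum d (rcons l a) = disc_sum d l + d ^+ size l * a.
Proof.
elim: l => [|b l IH] /=; first by rewrite mulr0 addr0 expr0 mul1r add0r.
by rewrite IH mulrDr addrA exprS mulrA.
Qed.

Lemma disc_sumZ (R : comPzRingType) (T : Type) (d c : R) (f : T -> R) l :
  disc_sum d [seq c * f q | q <- l] = c * disc_sum d [seq f q | q <- l].
Proof. by elim: l => [|q l IH] /=; rewrite ?mulr0 // IH mulrDr mulrCA. Qed.

Lemma disc_sum_nseq1 (R : comPzRingType) (d : R) m :
  (1 - d) * disc_sum d (nseq m 1) = 1 - d ^+ m.
Proof. by elim: m => [|m IH] /=; rewrite ?mulr0 ?subrr // mulrDr mulrCA IH exprS; ring. Qed.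

(* Abel summation: the discounted sum is a convex combination of the partial
   sums. *)
Lemma disc_sum_le (R : realDomainType) (d C : R) (l : seq R) : 0 <= d <= 1 ->
  (forall j, \sum_(a <- take j l) a <= C) -> disc_sum d l <= C.
Proof.
case/andP=> d_ge0 d_le1; elim: l C => [|a l IH] C le_C /=.
  by have := le_C 0%N; rewrite take0 big_nil.
have a_le : a <= C by have := le_C 1%N; rewrite /= take0 big_cons big_nil addr0.
have tail_le : disc_sum d l <= C - a.
  by apply: IH => j; rewrite lerBrDl; have := le_C j.+1; rewrite /= big_cons.
have : d * disc_sum d l <= d * (C - a) by rewrite ler_wpM2l.
nra.
Qed.

Section TerminalPayoff.
Variables (R : realFieldType) (S Y : finType) (x : S -> S -> Y -> R).
Variables (v z d : R) (n : nat).

Definition transfer (h : hist S Y) : R :=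
  disc_sum d [seq x e.1.1 e.1.2 e.2 | e <- edges h.1 h.2].

Definition elapsed (h : hist S Y) : R := disc_sum d (nseq (size h.1) 1).

(* [promised h] is [d ^+ size h.1] times the continuation value after [h]
   (see [val_stat_eq] below): [z] adjusted by the discounted surpluses
   [x - v] of the realised transitions. *)
Definition promised (h : hist S Y) : R :=
  z + (1 - d) * (transfer h - v * elapsed h).

Definition wterm (h : hist S Y) : R := promised h / d ^+ n.-1.

Lemma promised_nil s : promised ([::], s) = z.
Proof. by rewrite /promised /transfer /elapsed /= mulr0 subr0 mulr0 addr0. Qed.

Lemma promised_rcons l s y t : promised (rcons l (s, y), t) =
  promised (l, s) + (1 - d) * d ^+ size l * (x s t y - v).
Proof.
rewrite /promised /transfer /elapsed /= edges_rcons map_rcons disc_sum_rcons.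
rewrite size_rcons -addn1 nseqD cats1 disc_sum_rcons size_map size_edges size_nseq.
ring.
Qed.

Lemma wterm_terminal l s : d != 0 -> size l = n.-1 ->
  d ^+ size l * wterm (l, s) = promised (l, s).
Proof. by move=> d_neq0 ->; rewrite mulrC divfK // expf_neq0. Qed.

Lemma elapsed_geom h : (1 - d) * elapsed h = 1 - d ^+ size h.1.
Proof. exact: disc_sum_nseq1. Qed.

Lemma transfer_le (lam k : R) h : 0 <= d <= 1 -> 0 <= k ->
  (forall s t y, lam * x s t y <= k) ->
  (forall (T : {set S}) (xi : {perm S}) (psi : S -> Y), perm_on T xi ->
     lam * (\sum_(s in T) x s (xi s) (psi s)) <= 0) ->
  lam * transfer h <= k * #|S|%:R.
Proof.
move=> d01 k_ge0 lamx_le lam_cycle; rewrite /transfer -disc_sumZ.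
apply: disc_sum_le => // j; rewrite -map_take take_edges big_map.
apply: (edges_sum_le (a := fun s t y => lam * x s t y)) => // T xi psi xi_on.
by rewrite -mulr_sumr lam_cycle.
Qed.

Lemma lam_wterm_lt (lam k eps0 : R) h :
  0 < d < 1 -> 0 < eps0 -> 0 <= k ->
  (forall s t y, lam * x s t y <= k) ->
  (forall (T : {set S}) (xi : {perm S}) (psi : S -> Y), perm_on T xi ->
     lam * (\sum_(s in T) x s (xi s) (psi s)) <= 0) ->
  lam * (z - v) < - eps0 ->
  0 < eps0 * ((n%:R - 1) / 2) - 2 * k * #|S|%:R ->
  (n%:R - 1) * (1 - d) / 2 <= 1 - d ^+ n.-1 ->
  size h.1 = n.-1 -> lam * wterm h < lam * z.
Proof.
move=> /andP[d_gt0 d_lt1] eps0_gt0 k_ge0 lamx_le lam_cycle gap drift decay hn.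
have lamX : lam * transfer h <= k * #|S|%:R.
  by apply: transfer_le => //; rewrite !ltW.
have geomG := elapsed_geom h; rewrite hn in geomG.
set N := n%:R in drift decay; set K := #|S|%:R in lamX drift.
have K_ge0 : 0 <= K by rewrite ler0n.
have n_gt1 : (1 < n)%N.
  rewrite -(ltr_nat R) -/N; have : 0 < eps0 * ((N - 1) / 2) by nra.
  by rewrite pmulr_rgt0 // => ?; lra.
have D_gt0 : 0 < d ^+ n.-1 by rewrite exprn_gt0.
have D_lt1 : d ^+ n.-1 < 1 by rewrite exprn_ilt1 ?ltW // -lt0n; lia.
rewrite /wterm mulrA ltr_pdivrMr // /promised.
set X := transfer h in lamX *; set G := elapsed h in geomG *.
set D := d ^+ n.-1 in geomG decay D_gt0 D_lt1 *.
have -> : lam * (z + (1 - d) * (X - v * G)) =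
    lam * z * D + ((1 - D) * (lam * (z - v)) + (1 - d) * (lam * X)).
  have D_eq : D = 1 - (1 - d) * G by rewrite geomG; ring.
  by rewrite D_eq; ring.
have : (1 - d) * (lam * X) <= (1 - d) * (k * K) by rewrite ler_wpM2l // subr_ge0 ltW.
have : (1 - D) * (lam * (z - v)) <= (1 - D) * (- eps0) by rewrite ler_wpM2l ?subr_ge0 ?ltW.
have : (N - 1) * (1 - d) / 2 * eps0 <= (1 - D) * eps0 by rewrite ler_wpM2r // ltW.
have : 0 < (1 - d) * (eps0 * ((N - 1) / 2) - 2 * k * K) by rewrite mulr_gt0 // subr_gt0.
have : 0 <= (1 - d) * (k * K) by rewrite !mulr_ge0 // subr_ge0 ltW.
lra.
Qed.

End TerminalPayoff.

Lemma sum2_affine (R : comPzRingType) (T1 T2 : finType) (P A Q X : T1 -> T2 -> R)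
    (e K c v : R) :
  (forall t y, Q t y = K + c * (X t y - v)) ->
  \sum_t \sum_y P t y * (e * A t y - Q t y) =
  e * (\sum_t \sum_y P t y * A t y) - (K - c * v) * (\sum_t \sum_y P t y) -
  c * (\sum_t \sum_y X t y * P t y).
Proof.
move=> Q_eq; rewrite !mulr_sumr -!sumrB; apply: eq_bigr => t _.
by rewrite !mulr_sumr -!sumrB; apply: eq_bigr => y _; rewrite Q_eq; ring.
Qed.

Section Equilibrium.
Variables (R : realType) (I S B Y : finType).
Variables (p : S -> {ffun I -> B} -> S -> Y -> R) (u : I -> {ffun I -> B} -> S -> R).
Hypotheses (p_prob : transition_prob p) (p_u_sym : symmetric_game p u).

Lemma prof_prob_sum1 (be : I -> {ffun B -> R}) :
  (forall j, is_mixed (be j)) -> \sum_a prof_prob be a = 1.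
Proof.
move=> be_mixed; rewrite /prof_prob -(bigA_distr_bigA (fun i b => be i b)) /=.
by rewrite big1 // => i _; case: (be_mixed i).
Qed.

Lemma prof_prob_ge0 (be : I -> {ffun B -> R}) a :
  (forall j, is_mixed (be j)) -> 0 <= prof_prob be a.
Proof. by move=> be_mixed; apply: prodr_ge0 => i _; case: (be_mixed i). Qed.

Lemma exp_p_ge0 (be : I -> {ffun B -> R}) s t y :
  (forall j, is_mixed (be j)) -> 0 <= exp_p p be s t y.
Proof.
move=> be_mixed; apply: sumr_ge0 => a _.
by rewrite mulr_ge0 ?prof_prob_ge0 //; case: p_prob.
Qed.

Lemma exp_p_sum1 (be : I -> {ffun B -> R}) s :
  (forall j, is_mixed (be j)) -> \sum_t \sum_y exp_p p be s t y = 1.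
Proof.
move=> be_mixed; rewrite -(prof_prob_sum1 be_mixed) /exp_p.
under eq_bigr do rewrite exchange_big /=.
rewrite exchange_big /=; apply: eq_bigr => a _.
by under eq_bigr do rewrite -mulr_sumr; rewrite -mulr_sumr p_prob.2 mulr1.
Qed.

Lemma exp_u_sym_prof i0 i al s :
  exp_u u i0 (sym_prof al) s = exp_u u i (sym_prof al) s.
Proof.
pose pi := tperm i i0.
pose permute (a : {ffun I -> B}) : {ffun I -> B} := [ffun j => a (pi j)].
have permuteK : involutive permute by move=> a; apply/ffunP => j; rewrite !ffunE tpermK.
rewrite /exp_u (reindex_inj (inv_inj permuteK)); apply: eq_bigr => a _; congr (_ * _).
  rewrite /prof_prob (reindex_inj (@perm_inj _ pi)) /=.
  by apply: eq_bigr => j _; rewrite ffunE tpermK.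
by rewrite (p_u_sym pi a s).1 tpermR.
Qed.

Lemma ucomE al s i : ucom u al s = exp_u u i (sym_prof al) s.
Proof. by rewrite /ucom; case: pickP => [i0 _|/(_ i)//]; apply: exp_u_sym_prof. Qed.

Lemma prof_prob_dev i (be : I -> {ffun B -> R}) (bt al : {ffun B -> R}) a :
  (forall j, be j = if j == i then bt else al) ->
  prof_prob be a = \sum_b bt b * prof_prob (dev_prof i b al) a.
Proof.
move=> be_dev.
have others : \prod_(j | j != i) be j (a j) = \prod_(j | j != i) al (a j).
  by apply: eq_bigr => j /negbTE j_neq; rewrite be_dev j_neq.
have dev_split b : prof_prob (dev_prof i b al) a =
    pure R b (a i) * \prod_(j | j != i) al (a j).
  rewrite /prof_prob (bigD1 i) //= /dev_prof eqxx; congr (_ * _).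
  by apply: eq_bigr => j /negbTE ->.
under eq_bigr do rewrite dev_split mulrA.
rewrite -mulr_suml /prof_prob (bigD1 i) //= others be_dev eqxx; congr (_ * _).
rewrite (bigD1 (a i)) //= ffunE eqxx mulr1 big1 ?addr0 // => b b_neq.
by rewrite ffunE eq_sym (negbTE b_neq) mulr0.
Qed.

Lemma sum_prof_dev i (be : I -> {ffun B -> R}) (bt al : {ffun B -> R})
    (F : {ffun I -> B} -> R) :
  (forall j, be j = if j == i then bt else al) ->
  \sum_a prof_prob be a * F a =
  \sum_b bt b * \sum_a prof_prob (dev_prof i b al) a * F a.
Proof.
move=> be_dev; under eq_bigr => a _ do rewrite (prof_prob_dev a be_dev) mulr_suml.
rewrite exchange_big /=; apply: eq_bigr => b _; rewrite mulr_sumr.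
by apply: eq_bigr => a _; rewrite mulrA.
Qed.

Section StationaryStrategy.
Variables (v z d : R) (n : nat) (al : S -> {ffun B -> R}) (x : S -> S -> Y -> R).
Hypotheses (al_mixed : forall s, is_mixed (al s)) (d_gt0 : 0 < d) (d_le1 : d <= 1).
Hypothesis al_value : forall s, v = ucom u (al s) s +
  \sum_t \sum_y x s t y * exp_p p (sym_prof (al s)) s t y.
Hypothesis al_incentive : forall s i b, v >= exp_u u i (dev_prof i b (al s)) s +
  \sum_t \sum_y x s t y * exp_p p (dev_prof i b (al s)) s t y.

Definition stat_strat : pub_strat R S B Y := fun h => al h.2.

Local Notation W := (wterm x v z d n).

Definition stage_gain i (be : I -> {ffun B -> R}) s : R :=
  exp_u u i be s + \sum_t \sum_y x s t y * exp_p p be s t y - v.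

Lemma stat_gain i l s : stage_gain i (fun=> stat_strat (l, s)) s = 0.
Proof. by rewrite /stage_gain [v](al_value s) (ucomE _ _ i) subrr. Qed.

Lemma dev_gain_le s i (be : I -> {ffun B -> R}) (bt : {ffun B -> R}) :
  (forall j, be j = if j == i then bt else al s) -> is_mixed bt ->
  stage_gain i be s <= 0.
Proof.
move=> be_dev [bt_ge0 bt_sum1].
have mix_transfer : \sum_t \sum_y x s t y * exp_p p be s t y =
    \sum_b bt b * \sum_t \sum_y x s t y * exp_p p (dev_prof i b (al s)) s t y.
  under eq_bigr => t _ do under eq_bigr => y _ do
    rewrite /exp_p (sum_prof_dev (fun a => p s a t y) be_dev) mulr_sumr.
  under eq_bigr => t _ do rewrite exchange_big /=.
  rewrite exchange_big /=; apply: eq_bigr => b _.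
  rewrite mulr_sumr; apply: eq_bigr => t _; rewrite mulr_sumr; apply: eq_bigr => y _.
  by rewrite mulrCA.
rewrite /stage_gain subr_le0 /exp_u (sum_prof_dev (fun a => u i a s) be_dev) mix_transfer.
rewrite -big_split /= -[v]mul1r -bt_sum1 mulr_suml; apply: ler_sum => b _.
by rewrite -mulrDr ler_wpM2l //; apply: al_incentive.
Qed.

Lemma promised_step i (be : I -> pub_strat R S B Y) m l s :
  (forall j, is_mixed (be j (l, s))) ->
  d ^+ size l * Defs.val p u i be W d m.+1 (l, s) - promised x v z d (l, s) =
  (1 - d) * d ^+ size l * stage_gain i (fun j => be j (l, s)) s +
  \sum_t \sum_y exp_p p (fun j => be j (l, s)) s t y *
    (d ^+ (size l).+1 * Defs.val p u i be W d m (rcons l (s, y), t) -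
     promised x v z d (rcons l (s, y), t)).
Proof.
move=> be_mixed /=.
rewrite (sum2_affine _ _ _ (fun t y => promised_rcons x v z d l s y t)).
by rewrite exp_p_sum1 // exprS /stage_gain; ring.
Qed.

Lemma val_stat_eq i m l s : (size l + m)%N = n.-1 ->
  d ^+ size l * Defs.val p u i (fun=> stat_strat) W d m (l, s) =
  promised x v z d (l, s).
Proof.
elim: m l s => [|m IH] l s size_lm.
  by rewrite wterm_terminal ?gt_eqF // -size_lm addn0.
apply/eqP; rewrite -subr_eq0 promised_step => [|j]; last exact: al_mixed.
rewrite stat_gain mulr0 add0r.
rewrite big1 // => t _; rewrite big1 // => y _.
by rewrite -(size_rcons l (s, y)) IH ?subrr ?mulr0 // size_rcons addSnnS.
Qed.

Lemma val_dev_le i (tau : pub_strat R S B Y) m l s :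
  valid_strat tau -> (size l + m)%N = n.-1 ->
  d ^+ size l * Defs.val p u i (dev_strat i tau stat_strat) W d m (l, s) <=
  promised x v z d (l, s).
Proof.
move=> tau_valid; elim: m l s => [|m IH] l s size_lm.
  by rewrite wterm_terminal ?gt_eqF // -size_lm addn0.
have dev_at j : dev_strat i tau stat_strat j (l, s) = if j == i then tau (l, s) else al s.
  by rewrite /dev_strat; case: (j == i).
have dev_mixed j : is_mixed (dev_strat i tau stat_strat j (l, s)).
  by rewrite dev_at; case: (j == i); [apply: tau_valid | apply: al_mixed].
rewrite -subr_le0 promised_step //; apply: ler_wnDl.
  apply: mulr_ge0_le0; last exact: dev_gain_le dev_at (tau_valid _).
  by rewrite mulr_ge0 ?subr_ge0 // exprn_ge0 // ltW.
apply: sumr_le0 => t _; apply: sumr_le0 => y _.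
rewrite mulr_ge0_le0 ?exp_p_ge0 // subr_le0 -(size_rcons l (s, y)) IH //.
by rewrite size_rcons addSnnS.
Qed.

Lemma stat_strat_SSE s : SSE_payoff p u n s W d z.
Proof.
have payoff_eq i : payoffG p u n s W d i (fun=> stat_strat) = z.
  by have := val_stat_eq i (l := [::]) s (add0n _); rewrite expr0 mul1r promised_nil.
exists stat_strat; split=> //; split=> [h | i tau tau_valid]; first exact: al_mixed.
have := val_dev_le i (l := [::]) s tau_valid (add0n _).
by rewrite expr0 mul1r promised_nil payoff_eq.
Qed.

End StationaryStrategy.

End Equilibrium.

Lemma dist_le_sup_interval (R : realType) (zl zh v z : R) : zl <= z <= zh ->
  `|z - v| <= sup [set `|z' - v| | z' in [set z' | zl <= z' <= zh]].
Proof.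
move=> z_in; apply: sup_upper_bound; last by exists z.
split; first by exists `|z - v|, z.
exists (`|zl - v| + `|zh - v|) => _ [z' /andP[zl_le le_zh] <-].
move: (ler_norm (zh - v)) (ler_norm (- (zl - v))) (normr_ge0 (zl - v)) (normr_ge0 (zh - v)).
by rewrite normrN => *; apply/ler_normlP; split; lra.
Qed.

Section Kappa0.
Variables (R : realType) (S Y : finType) (xm xp : S -> S -> Y -> R).
Variables (vm vp zl zh : R).
Local Notation k0 := (kappa0 xm xp vm vp zl zh).

Lemma kappa0_ge_transfers s t y : `|xm s t y| <= k0 /\ `|xp s t y| <= k0.
Proof.
have le_big : Num.max `|xm s t y| `|xp s t y| <=
    \big[Num.max/0]_s' \big[Num.max/0]_t' \big[Num.max/0]_y'
      Num.max `|xm s' t' y'| `|xp s' t' y'|.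
  apply: le_trans (le_bigmax _ _ s); apply: le_trans (le_bigmax _ _ t).
  exact: (le_bigmax _ (fun y' => Num.max `|xm s t y'| `|xp s t y'|) y).
have le_k0 : Num.max `|xm s t y| `|xp s t y| <= k0.
  by apply: le_trans le_big _; rewrite /kappa0 le_max lexx.
by split; apply: le_trans le_k0; rewrite le_max lexx ?orbT.
Qed.

Lemma kappa0_ge_dist z : zl <= z <= zh -> `|z - vm| <= k0 /\ `|z - vp| <= k0.
Proof. by move=> z_in; rewrite /kappa0 !le_max !dist_le_sup_interval ?orbT. Qed.

End Kappa0.

(* The only use of the hypothesis [(n/2)^2 (1 - d) <= |S|]: it keeps [d] away
   from [0], so that the terminal payoff can be rescaled by [d^-(n-1)]. *)
Lemma discount_gt0 (R : realFieldType) (N K k eps0 d : R) :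
  0 <= K -> 0 < eps0 -> eps0 < k ->
  0 < eps0 * ((N - 1) / 2) - 2 * k * K -> (N / 2) ^+ 2 * (1 - d) <= K -> 0 < d.
Proof.
move=> K_ge0 eps0_gt0 eps0_lt drift sq_le.
have eps0K_le : 2 * eps0 * K <= 2 * k * K by rewrite ler_wpM2r // ler_wpM2l // ltW.
have N_gt : 1 + 4 * K < N.
  have : 0 < eps0 * ((N - 1) / 2 - 2 * K) by nra.
  by rewrite pmulr_rgt0 // => ?; lra.
rewrite ltNge; apply/negP => d_le0.
have : (N / 2) ^+ 2 <= (N / 2) ^+ 2 * (1 - d) by rewrite ler_peMr ?exprn_ge0 //; lra.
rewrite expr2; nra.
Qed.

Lemma SSE_terminal_below (R : realType) (I S B Y : finType)
    (p : S -> {ffun I -> B} -> S -> Y -> R) (u : I -> {ffun I -> B} -> S -> R)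
    (lam v : R) (al : S -> {ffun B -> R}) (x : S -> S -> Y -> R)
    (z d eps0 k : R) (n : nat) :
  transition_prob p -> symmetric_game p u -> feasible p u lam v al x ->
  (forall s t y, lam * x s t y <= k) -> eps0 < k -> 0 < eps0 ->
  lam * (z - v) < - eps0 ->
  0 < eps0 * ((n%:R - 1) / 2) - 2 * k * #|S|%:R ->
  (n%:R / 2) ^+ 2 * (1 - d) <= #|S|%:R ->
  (n%:R - 1) * (1 - d) / 2 <= 1 - d ^+ n.-1 -> d < 1 ->
  exists w : hist S Y -> R,
    (forall s : S, SSE_payoff p u n s w d z) /\
    (forall h : hist S Y, in_Hn n h -> lam * w h < lam * z).
Proof.
move=> p_prob p_u_sym [al_mixed [al_value [al_incentive lam_cycle]]].
move=> lamx_le eps0_lt eps0_gt0 gap drift sq_le decay d_lt1.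
have d_gt0 : 0 < d := discount_gt0 (ler0n _ _) eps0_gt0 eps0_lt drift sq_le.
exists (wterm x v z d n); split=> [s | h h_n].
  by apply: stat_strat_SSE; rewrite ?ltW.
apply: lam_wterm_lt lamx_le lam_cycle gap drift decay h_n; rewrite ?d_gt0 //.
exact: le_trans (ltW eps0_gt0) (ltW eps0_lt).
Qed.

Theorem mainTheorem3 (R : realType) (I S B Y : finType)
    (p : S -> {ffun I -> B} -> S -> Y -> R) (u : I -> {ffun I -> B} -> S -> R)
    (Hp : transition_prob p) (Hsym : symmetric_game p u)
    (zl zh : R) (Hz : zl < zh)
    (Hkm : (- kSS p u (-1) < zl%:E)%E) (Hkp : (zh%:E < kSS p u 1)%E)
    (eps0 : R) (Heps0 : 0 < eps0)
    (vm vp : R) (alm alp : S -> {ffun B -> R}) (xm xp : S -> S -> Y -> R)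
    (Hfm : feasible p u (-1) vm alm xm) (Hfp : feasible p u 1 vp alp xp)
    (Hv : forall z, zl <= z <= zh -> vm + eps0 < z /\ z < vp - eps0)
    (n : nat)
    (Hn : 0 < eps0 * ((n%:R - 1) / 2) - 2 * kappa0 xm xp vm vp zl zh * #|S|%:R)
    (dbar : R) (Hdbar : dbar < 1)
    (Hd : forall d, dbar <= d < 1 ->
        (n%:R / 2) ^+ 2 * (1 - d) <= #|S|%:R /\
        (n%:R - 1) * (1 - d) / 2 <= 1 - d ^+ n.-1) :
  forall (lam : R), lam = -1 \/ lam = 1 ->
  forall z, zl <= z <= zh ->
  forall d, dbar <= d < 1 ->
  exists w : hist S Y -> R,
    (forall s : S, SSE_payoff p u n s w d z) /\
    (forall h : hist S Y, in_Hn n h -> lam * w h < lam * z).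
Proof.
(* [Hz], [Hkm], [Hkp] and [Hdbar] only make the hypotheses satisfiable. *)
move=> lam lam_sign z z_in d /[dup] d_in /andP[_ d_lt1].
have [sq_le decay] := Hd d d_in.
set k := kappa0 xm xp vm vp zl zh in Hn.
have [v [al [x [feas x_le dist_le gap]]]] : exists v al x,
    [/\ feasible p u lam v al x, forall s t y, `|x s t y| <= k,
        `|z - v| <= k & lam * (z - v) < - eps0].
  have [[vm_lt lt_vp] [dist_m dist_p]] := (Hv z z_in, kappa0_ge_dist xm xp vm vp z_in).
  case: lam_sign => ->; [exists vm, alm, xm | exists vp, alp, xp]; split=> //;
    first [by move=> s t y; case: (kappa0_ge_transfers xm xp vm vp zl zh s t y) | lra].
have lam_norm : `|lam| = 1 by case: lam_sign => ->; rewrite ?normrN normr1.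
apply: (SSE_terminal_below Hp Hsym feas _ _ Heps0 gap Hn sq_le decay d_lt1).
  by move=> s t y; apply: le_trans (ler_norm _) _; rewrite normrM lam_norm mul1r.
apply: lt_le_trans dist_le; rewrite -[`|z - v|]mul1r -lam_norm -normrM -normrN.
by apply: lt_le_trans (ler_norm _); rewrite ltrNr.
Qed.
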